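(* Let $\theta_{OLS}\in\mathbb R$ and let $\{SB_0(\iota_0):\iota_0\in\mathcal I_0\}$ be a nonempty bounded set of real numbers indexed by a baseline information set $\mathcal I_0$; write $\underline s=\inf_{\iota_0\in\mathcal I_0}SB_0(\iota_0)$ and $\overline s=\sup_{\iota_0\in\mathcal I_0}SB_0(\iota_0)$. Let $\Lambda$ be the set of possible distributions of $SB_0(I_0)$, i.e. probability distributions supported on $\{SB_0(\iota_0):\iota_0\in\mathcal I_0\}$. For $\lambda\in\Lambda$ and a random variable $Z\sim\lambda$, let $SB_1(\lambda)$ be the optimal choice of $s\in\mathbb R$ for one of the following losses: (L1) $\mathbb E|s-Z|$, whose minimizer is a median of $\lambda$; (L2) $\big(\mathbb E[(s-Z)^2]\big)^{1/2}$, whose minimizer is the mean of $\lambda$; (L$\infty$) $\operatorname{ess\,sup}|s-Z|$, whose minimizer is the midpoint of the smallest closed interval containing the support of $\lambda$. Define $ATT_\lambda=\theta_{OLS}-SB_1(\lambda)$. Then for each of the three losses, $$\Big[\inf_{\lambda\in\Lambda}ATT_\lambda,\ \sup_{\lambda\in\Lambda}ATT_\lambda\Big]=\big[\theta_{OLS}-\overline s,\ \theta_{OLS}-\underline s\big].$$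
   Context: Background: in a two-period difference-in-differences setting, $\theta_{OLS}=\mathbb E[Y_1\mid D=1]-\mathbb E[Y_1\mid D=0]$ and $SB_0(\iota_0)=\mathbb E[Y_0\mid D=1,I_0=\iota_0]-\mathbb E[Y_0\mid D=0,I_0=\iota_0]$ is the baseline selection bias given information $\iota_0$. A decision maker picks the post-treatment selection bias $SB_1$ by minimizing a $p$-norm loss $\big(\mathbb E_{I_0}|SB_1-SB_0(I_0)|^p\big)^{1/p}$, $p\in\{1,2,\infty\}$, for a given distribution $\lambda$ of $SB_0(I_0)$; the interval $[\inf_\lambda ATT_\lambda,\sup_\lambda ATT_\lambda]$ is called the robust generalized DID bounds. *)

From HB Require Import structures.
From mathcomp Require Import all_boot all_order all_algebra.
From mathcomp Require Import all_classical all_reals all_analysis.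
Set Implicit Arguments. Unset Strict Implicit. Unset Printing Implicit Defensive.
Import Order.TTheory GRing.Theory Num.Theory.
Import numFieldNormedType.Exports.
Local Open Scope classical_set_scope.
Local Open Scope ring_scope.

(* Probability distributions on the Borel real line supported on the set S:
   the complement of S is P-negligible (S need not be measurable). *)
Definition supported_on (R : realType) (P : probability R R) (S : set R) : Prop :=
  {ae P, forall x, S x}.

Definition Lambda (R : realType) (I0 : Type) (SB0 : I0 -> R) : set (probability R R) :=
  [set P | supported_on P (range SB0)].

(* p-norm loss  (E |s - Z|^p)^(1/p)  (ess sup |s - Z| for p = +oo), Z ~ P. *)
Definition loss (R : realType) (p : \bar R) (P : probability R R) (s : R) : \bar R :=
  Lnorm P p (fun z => ((s - z)%R)%:E).

Definition is_optimal (R : realType) (p : \bar R) (P : probability R R) (s : R) : Prop :=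
  forall t : R, (loss p P s <= loss p P t)%E.

From HB Require Import structures.
From mathcomp Require Import all_boot all_order all_algebra.
From mathcomp Require Import all_classical all_reals all_analysis.
From mathcomp Require Import lra ess_sup_inf measurable_realfun.
Set Implicit Arguments. Unset Strict Implicit. Unset Printing Implicit Defensive.
Import Order.TTheory GRing.Theory Num.Theory.
Import numFieldNormedType.Exports.
Local Open Scope classical_set_scope.
Local Open Scope ring_scope.

(* Let S be the range of SB_0.  An optimal s lies in [inf S, sup S]:
   if, say, s < a <= z for almost every z, then |s - z| = |s - a| + |a - z|, so
   replacing s by a lowers |s - z| by the fixed amount |s - a| almost everywhere,
   which strictly lowers each of the three losses.  For the Dirac mass at a point
   of S the optimum is that point.  Hence the set of optimal choices contains S
   and is contained in its hull, so it has the same inf and sup as S. *)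

Lemma exprDn_ge (R : realDomainType) (n : nat) (x y : R) : (0 < n)%N ->
  0 <= x -> 0 <= y -> x ^+ n + y ^+ n <= (x + y) ^+ n.
Proof.
move=> n0 x0 y0; elim: n n0 => // [[_|n IHn _]]; first by rewrite !expr1.
have xyn := mulr_ge0 x0 (exprn_ge0 n.+1 y0).
have yxn := mulr_ge0 y0 (exprn_ge0 n.+1 x0).
rewrite [in leRHS]exprS; apply: le_trans (ler_wpM2l (addr_ge0 x0 y0) (IHn isT)).
rewrite [x ^+ _]exprS [y ^+ n.+2]exprS mulrDl !mulrDr; lra.
Qed.

Section ae_gap.
Context d (T : measurableType d) (R : realType) (P : probability T R).
Local Open Scope ereal_scope.

Lemma integral_cst_probability (r : R) : \int[P]_x r%:E = r%:E.
Proof. by rewrite integral_cst //= probability_setT mule1. Qed.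

Lemma integral_fin_num_ae_bounded (G : T -> R) (M : R) :
  measurable_fun setT G -> (forall x, 0 <= G x)%R ->
  (\forall x \ae P, G x <= M)%R -> \int[P]_x (G x)%:E \is a fin_num.
Proof.
move=> mG G0 GM.
have intG_le : \int[P]_x (G x)%:E <= `|M|%:E.
  rewrite -[leRHS]integral_cst_probability.
  apply: ae_ge0_le_integral => //.
  - by move=> x _; rewrite lee_fin.
  - exact/measurable_EFinP.
  - by apply: filterS GM => x GxM _; rewrite lee_fin (le_trans GxM) ?ler_norm.
rewrite ge0_fin_numE; first exact: le_lt_trans intG_le (ltry _).
by apply: integral_ge0 => x _; rewrite lee_fin.
Qed.

Lemma integral_lt_ae_gap (G H : T -> R) (c : R) :
  measurable_fun setT G -> measurable_fun setT H ->
  (forall x, 0 <= G x)%R -> (forall x, 0 <= H x)%R -> (0 < c)%R ->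
  \int[P]_x (G x)%:E \is a fin_num ->
  (\forall x \ae P, G x + c <= H x)%R ->
  \int[P]_x (G x)%:E < \int[P]_x (H x)%:E.
Proof.
move=> mG mH G0 H0 c0 intG_fin gap.
have intGc : \int[P]_x ((G x)%:E + c%:E) = \int[P]_x (G x)%:E + c%:E.
  rewrite ge0_integralD //.
  - by rewrite integral_cst_probability.
  - by move=> x _; rewrite lee_fin.
  - exact/measurable_EFinP.
  - by move=> x _; rewrite lee_fin ltW.
apply: (@lt_le_trans _ _ (\int[P]_x ((G x)%:E + c%:E))).
  by rewrite intGc lteDl // lte_fin.
apply: ae_ge0_le_integral => //.
- by move=> x _; rewrite adde_ge0 ?lee_fin ?(ltW c0).
- by apply: emeasurable_funD => //; exact/measurable_EFinP.
- by move=> x _; rewrite lee_fin.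
- exact/measurable_EFinP.
- by apply: filterS gap => x Gxc _; rewrite -EFinD lee_fin.
Qed.

Lemma ess_sup_lt_ae_gap (G H : T -> R) (c M : R) :
  (forall x, 0 <= G x)%R -> (0 < c)%R ->
  (\forall x \ae P, G x <= M)%R -> (\forall x \ae P, G x + c <= H x)%R ->
  ess_sup P (EFin \o G) < ess_sup P (EFin \o H).
Proof.
move=> G0 c0 GM gap.
have P0 : 0 < P setT by rewrite probability_setT.
have supH_ge : c%:E <= ess_sup P (EFin \o H).
  apply: ess_sup_gee => //; apply: filterS gap => x Gxc.
  by rewrite lee_fin (le_trans _ Gxc) // lerDr.
case supHE : (ess_sup P (EFin \o H)) => [s| |]; last by rewrite supHE in supH_ge.
- have supG_le : ess_sup P (EFin \o G) <= (s - c)%:E.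
    apply/ess_supP; apply: filterS2 gap (ess_sup_ge P (EFin \o H)).
    by move=> x Gxc; rewrite supHE /= !lee_fin => Hxs; lra.
  by apply: le_lt_trans supG_le _; rewrite lte_fin; lra.
- apply: le_lt_trans (ltry M).
  by apply/ess_supP; apply: filterS GM => x; rewrite /= lee_fin.
Qed.

(* The bound [M] keeps [\int |f|^n] finite; without it the strict inequality fails. *)
Lemma Lnorm_lt_ae_gap (p : \bar R) (f g : T -> R) (c M : R) :
  (p = +oo \/ exists2 n : nat, (0 < n)%N & p = n%:R%:E) ->
  measurable_fun setT f -> measurable_fun setT g -> (0 < c)%R ->
  (\forall x \ae P, `|f x| <= M /\ `|f x| + c <= `|g x|)%R ->
  Lnorm P p (EFin \o f) < Lnorm P p (EFin \o g).
Proof.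
move=> [->|[n n0 ->]] mf mg c0 gap.
  rewrite unlock /= probability_setT lte01.
  apply: (@ess_sup_lt_ae_gap (fun x => `|f x|%R) (fun x => `|g x|%R) c M) => //.
  - by apply: filterS gap => x [].
  - by apply: filterS gap => x [].
have normX (h : T -> R) x : `|(h x)%:E| `^ n%:R = (`|h x| ^+ n)%:E.
  by rewrite abse_EFin poweR_EFin powR_mulrn.
have mX (h : T -> R) : measurable_fun setT h -> measurable_fun setT (fun x => `|h x| ^+ n)%R.
  by move=> mh; apply: measurable_funX; exact: measurableT_comp mh.
have gapX : (\forall x \ae P, `|f x| ^+ n <= M ^+ n /\ `|f x| ^+ n + c ^+ n <= `|g x| ^+ n)%R.
  apply: filterS gap => x [fM fcg]; split; first by rewrite lerXn2r ?nnegrE ?(le_trans _ fM).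
  apply: le_trans (exprDn_ge n0 (normr_ge0 _) (ltW c0)) _.
  by rewrite lerXn2r // nnegrE (addr_ge0 (normr_ge0 _) (ltW c0)).
have intX_lt : \int[P]_x `|(f x)%:E| `^ n%:R < \int[P]_x `|(g x)%:E| `^ n%:R.
  under eq_integral do rewrite normX; under [X in _ < X]eq_integral do rewrite normX.
  apply: (integral_lt_ae_gap (c := c ^+ n)) => //; rewrite ?exprn_gt0 //; try exact: mX.
  - apply: (integral_fin_num_ae_bounded (M := M ^+ n)) => //; first exact: mX.
    by apply: filterS gapX => x [].
  - by apply: filterS gapX => x [].
rewrite ltNge; apply/negP => Lnorm_ge.
have := gt0_ler_poweR (ler0n _ n) _ _ Lnorm_ge.
rewrite !poweR_Lnorm ?pnatr_eq0 -?lt0n // !in_itv /= !Lnorm_ge0 !leey => /(_ isT isT).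
by apply/negP; rewrite -ltNge.
Qed.

End ae_gap.

Lemma ae_dirac (R : realType) (x : R) (Q : set R) : Q x ->
  {ae (\d_x : probability R R), forall z, Q z}.
Proof.
move=> Qx; exists [set~ x]; split.
- exact: measurableC (measurable_set1 x).
- rewrite /= diracE memNset; last exact: (fun nx => nx erefl).
  by rewrite mulr0n.
- by move=> z nQz zx; apply: nQz; rewrite zx.
Qed.


Lemma dist_between (R : realDomainType) (s t z : R) :
  s <= t <= z \/ z <= t <= s -> `|s - z| = `|s - t| + `|t - z|.
Proof.
case=> /andP[st tz].
- rewrite (distrC s z) (distrC s t) (distrC t z).
  rewrite !ger0_norm ?subr_ge0 ?(le_trans st tz) //.
  by rewrite [RHS]addrC addrA subrK.
- rewrite !ger0_norm ?subr_ge0 ?(le_trans st tz) //.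
  by rewrite addrA subrK.
Qed.
Section optimal_choice.
Context (R : realType) (p : \bar R) (P : probability R R).
Hypothesis hp : p = 1%E \/ p = 2%:E \/ p = +oo%E.

Lemma loss_lt_between (s t M : R) : s != t ->
  (\forall z \ae P, `|t - z| <= M /\ (s <= t <= z \/ z <= t <= s)) ->
  (loss p P t < loss p P s)%E.
Proof.
move=> st gap; apply: (Lnorm_lt_ae_gap (c := `|s - t|) (M := M)).
- case: hp => [->|[->|->]]; [right; exists 1%N|right; exists 2%N|left] => //.
- by apply: measurable_funB => //; exact: measurable_cst.
- by apply: measurable_funB => //; exact: measurable_cst.
- by rewrite normr_gt0 subr_eq0.
- by apply: filterS gap => z [tzM /dist_between ->]; split; rewrite // addrC.
Qed.

Lemma optimal_mem_hull (a b s : R) :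
  (\forall z \ae P, a <= z <= b) -> is_optimal p P s -> a <= s <= b.
Proof.
move=> supp opt.
apply/andP; split; rewrite leNgt; apply/negP => out.
- have := opt a; apply/negP; rewrite -ltNge.
  apply: (loss_lt_between (M := b - a)); first by rewrite lt_eqF.
  apply: filterS supp => z /andP[az zb]; split; last by left; rewrite ltW.
  by rewrite distrC ger0_norm ?subr_ge0 // lerB.
- have := opt b; apply/negP; rewrite -ltNge.
  apply: (loss_lt_between (M := b - a)); first by rewrite gt_eqF.
  apply: filterS supp => z /andP[az zb]; split; last by right; rewrite zb ltW.
  by rewrite ger0_norm ?subr_ge0 // lerB.
Qed.

End optimal_choice.

Lemma optimal_dirac (R : realType) (p : \bar R) (x s : R) :
  p = 1%E \/ p = 2%:E \/ p = +oo%E -> is_optimal p \d_x s -> s = x.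
Proof.
move=> hp opt.
have x_supp : \forall z \ae (\d_x : probability R R), x <= z <= x.
  by apply: ae_dirac; rewrite lexx.
have /andP[xs sx] := optimal_mem_hull hp x_supp opt.
by apply/eqP; rewrite eq_le sx xs.
Qed.

Section inf_sup.
Context (R : realType).
Implicit Types (A B : set R) (c : R).

Lemma inf_sup_sandwich A B : A !=set0 -> has_lbound A -> has_ubound A ->
  A `<=` B -> B `<=` [set y | inf A <= y <= sup A] ->
  inf B = inf A /\ sup B = sup A.
Proof.
move=> A0 lbA ubA AB B_hull.
have B0 : B !=set0 by case: A0 => a /AB; exists a.
have lbB : has_lbound B by exists (inf A) => y /B_hull /andP[].
have ubB : has_ubound B by exists (sup A) => y /B_hull /andP[].
split; apply/eqP; rewrite eq_le; apply/andP; split.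
- by apply: lb_le_inf => // a /AB; exact: ge_inf.
- by apply: lb_le_inf => // y /B_hull /andP[].
- by apply: ge_sup => // y /B_hull /andP[].
- by apply: ge_sup => // a /AB; exact: ub_le_sup.
Qed.

Lemma inf_image_subr c A : A !=set0 -> has_ubound A ->
  inf [set c - x | x in A] = c - sup A.
Proof.
move=> A0 ubA; have cA0 : [set c - x | x in A] !=set0 by case: A0 => a Aa; exists (c - a), a.
have lb_cA : lbound [set c - x | x in A] (c - sup A).
  by move=> _ [x Ax <-]; rewrite lerB // ub_le_sup.
apply/eqP; rewrite eq_le lb_le_inf // andbT.
suff : sup A <= c - inf [set c - x | x in A] by lra.
apply: ge_sup => // x Ax.
suff : inf [set c - x | x in A] <= c - x by lra.
by apply: ge_inf; [exists (c - sup A)|exists x].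
Qed.

Lemma sup_image_subr c A : A !=set0 -> has_lbound A ->
  sup [set c - x | x in A] = c - inf A.
Proof.
move=> A0 lbA; have cA0 : [set c - x | x in A] !=set0 by case: A0 => a Aa; exists (c - a), a.
have ub_cA : ubound [set c - x | x in A] (c - inf A).
  by move=> _ [x Ax <-]; rewrite lerB // ge_inf.
apply/eqP; rewrite eq_le ge_sup //=.
suff : c - sup [set c - x | x in A] <= inf A by lra.
apply: lb_le_inf => // x Ax.
suff : c - x <= sup [set c - x | x in A] by lra.
by apply: ub_le_sup; [exists (c - inf A)|exists x].
Qed.

End inf_sup.

Theorem lemma1 (R : realType) (I0 : Type) (SB0 : I0 -> R) (theta_OLS : R)
  (p : \bar R) (SB1 : probability R R -> R) :
  (exists i : I0, True) ->
  has_ubound (range SB0) -> has_lbound (range SB0) ->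
  (p = 1%E \/ p = 2%:E \/ p = +oo%E) ->
  (forall P, Lambda SB0 P -> is_optimal p P (SB1 P)) ->
  inf [set theta_OLS - SB1 P | P in Lambda SB0] = theta_OLS - sup (range SB0) /\
  sup [set theta_OLS - SB1 P | P in Lambda SB0] = theta_OLS - inf (range SB0).
Proof.
move=> [i _] ubS lbS hp opt.
set S := range SB0; set U := SB1 @` Lambda SB0.
have S0 : S !=set0 by exists (SB0 i), i.
have U_hull : U `<=` [set y | inf S <= y <= sup S].
  move=> _ [P LP <-]; apply: (optimal_mem_hull hp) (opt P LP).
  by apply: filterS (LP : \forall z \ae P, S z) => z Sz; rewrite ge_inf ?ub_le_sup.
have SU : S `<=` U.
  move=> _ [j _ <-]; have Ldirac : Lambda SB0 \d_(SB0 j) by apply: ae_dirac; exists j.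
  by exists \d_(SB0 j) => //; exact: optimal_dirac hp (opt _ Ldirac).
have [infU supU] := inf_sup_sandwich S0 lbS ubS SU U_hull.
have U0 : U !=set0 by case: S0 => s /SU; exists s.
have ubU : has_ubound U by exists (sup S) => y /U_hull /andP[].
have lbU : has_lbound U by exists (inf S) => y /U_hull /andP[].
rewrite -(image_comp SB1 (fun u => theta_OLS - u)) -/U.
by rewrite inf_image_subr ?sup_image_subr ?infU ?supU.
Qed.
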